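(* Consider a generalized Nash equilibrium problem with $N$ players in which the $i$th player, given the other players' strategies $x_{-i}$, solves \[ \min_{x_i\in\mathbb{R}^{n_i}} f_i(x_i,x_{-i})\quad\text{s.t.}\quad g_i(x_i,x_{-i})\ge 0, \] where $f_i$ and the components of $g_i=(g_{i,1},\dots,g_{i,s_i})$ are real polynomials in $x=(x_1,\dots,x_N)\in\mathbb{R}^n$, $n=n_1+\cdots+n_N$. Let $\{x^{(k)}\}$ be a sequence produced by the following Gauss–Seidel scheme: start from a feasible point $x^{(0)}$ and a parameter $\tau^{(0)}>0$; for $k=0,1,2,\dots$ and $i=1,\dots,N$ in order, let $x_i^{(k+1)}$ be a global minimizer of \[ \min_{x_i\in\mathbb{R}^{n_i}}\ f_i(x_1^{(k+1)},\dots,x_{i-1}^{(k+1)},x_i,x_{i+1}^{(k)},\dots,x_N^{(k)})+\tau^{(k)}\|x_i-x_i^{(k)}\|^2 \] subject to $g_i(x_1^{(k+1)},\dots,x_{i-1}^{(k+1)},x_i,x_{i+1}^{(k)},\dots,x_N^{(k)})\ge 0$; then choose $\tau^{(k+1)}\in[0,\tau^{(k)}]$ and set $x^{(k+1)}=(x_1^{(k+1)},\dots,x_N^{(k+1)})$. Assume $x^{(k)}\to x^*$ and $\tau^{(k)}\to 0$. If for each $i$ the set-valued map $G_i: x_{-i}\mapsto X_i(x_{-i})$ is inner semicontinuous relative to its domain $\operatorname{dom}G_i$, then $x^*$ is a generalized Nash equilibrium of the problem.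
   Context: For $x=(x_1,\dots,x_N)$, $x_{-i}$ denotes $(x_1,\dots,x_{i-1},x_{i+1},\dots,x_N)$ and $(y,x_{-i})$ denotes the vector whose $i$th block is $y$ and other blocks are those of $x_{-i}$. The feasible set of player $i$ is $X_i(x_{-i})=\{x_i\in\mathbb{R}^{n_i}: g_i(x_i,x_{-i})\ge 0\}$ (componentwise inequality). A generalized Nash equilibrium (GNE) is a point $x$ such that for each $i$, $x_i$ is a minimizer of player $i$'s problem with $x_{-i}$ fixed. The domain of $G_i$ is the set of $x_{-i}$ with $X_i(x_{-i})\neq\emptyset$. A set-valued map $G$ is inner semicontinuous at $z\in\operatorname{dom}G$ relative to $\operatorname{dom}G$ if for every $w\in G(z)$ and every sequence $z_\ell\in\operatorname{dom}G$ with $z_\ell\to z$ there exist $w_\ell\in G(z_\ell)$ with $w_\ell\to w$; it is inner semicontinuous relative to $\operatorname{dom}G$ if this holds at all points of $\operatorname{dom}G$. *)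

From HB Require Import structures.
From mathcomp Require Import all_boot all_order all_algebra.
From mathcomp Require Import all_classical all_reals all_analysis.
Unset Printing Implicit Defensive.
Import Order.TTheory GRing.Theory Num.Theory.
Import numFieldNormedType.Exports.
Local Open Scope classical_set_scope.
Local Open Scope ring_scope.

Section GNEP.
Variables (R : realType) (N : nat) (dims : 'I_N -> nat).

Definition profile := forall i : 'I_N, 'rV[R]_(dims i).

Definition repl (x : profile) (i : 'I_N) (y : 'rV[R]_(dims i)) : profile :=
  @dfwith _ (fun j : 'I_N => 'rV[R]_(dims j)) x i y.

Inductive is_poly : (profile -> R) -> Prop :=
  | poly_const (c : R) : is_poly (fun _ => c)
  | poly_coord (i : 'I_N) (j : 'I_(dims i)) : is_poly (fun x => x i 0 j)
  | poly_add p q : is_poly p -> is_poly q -> is_poly (fun x => p x + q x)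
  | poly_mul p q : is_poly p -> is_poly q -> is_poly (fun x => p x * q x).

Definition sqnorm {m : nat} (v : 'rV[R]_m) : R := \sum_(j < m) (v 0 j) ^+ 2.

Variables (s : 'I_N -> nat) (g : forall i : 'I_N, 'I_(s i) -> profile -> R).

Definition feasible_at (i : 'I_N) (x : profile) : Prop :=
  forall l : 'I_(s i), 0 <= g i l x.

(* G_i(x_{-i}) = X_i(x_{-i}); the i-th block of z is ignored *)
Definition Gmap (i : 'I_N) (z : profile) : set 'rV[R]_(dims i) :=
  [set y | feasible_at i (repl z i y)].

Definition in_dom (i : 'I_N) (z : profile) : Prop := exists y, Gmap i z y.

(* convergence of vectors, componentwise (= norm convergence in R^m) *)
Definition vcvg (m : nat) (u : nat -> 'rV[R]_m) (v : 'rV[R]_m) : Prop :=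
  forall j : 'I_m, (fun k => u k 0 j) @ \oo --> v 0 j.

Arguments vcvg {m}.

Definition pcvg (u : nat -> profile) (x : profile) : Prop :=
  forall i : 'I_N, vcvg (fun k => u k i) (x i).

Definition pcvg_except (i : 'I_N) (u : nat -> profile) (x : profile) : Prop :=
  forall j : 'I_N, j != i -> vcvg (fun k => u k j) (x j).

Definition isc_rel_dom (i : 'I_N) : Prop :=
  forall z : profile, in_dom i z ->
  forall w, Gmap i z w ->
  forall zs : nat -> profile, (forall l, in_dom i (zs l)) -> pcvg_except i zs z ->
  exists ws : nat -> 'rV[R]_(dims i), (forall l, Gmap i (zs l) (ws l)) /\ vcvg ws w.

Variable (f : 'I_N -> profile -> R).

Definition is_GNE (x : profile) : Prop :=
  forall i : 'I_N, Gmap i x (x i) /\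
    forall y, Gmap i x y -> f i x <= f i (repl x i y).

Definition gs_mixed (x : nat -> profile) (k : nat) (i : 'I_N) : profile :=
  fun j => if (j < i)%N then x k.+1 j else x k j.

Definition gauss_seidel_seq (x : nat -> profile) (tau : nat -> R) : Prop :=
  (forall i, feasible_at i (x 0%N)) /\ 0 < tau 0%N /\
  (forall k, 0 <= tau k.+1 <= tau k) /\
  (forall k (i : 'I_N),
     let z := gs_mixed x k i in
     Gmap i z (x k.+1 i) /\
     forall y, Gmap i z y ->
       f i (repl z i (x k.+1 i)) + tau k * sqnorm (x k.+1 i - x k i)
       <= f i (repl z i y) + tau k * sqnorm (y - x k i)).

End GNEP.

Arguments profile R {N} dims.
Arguments is_poly {R N dims}.
Arguments feasible_at {R N dims s}.
Arguments Gmap {R N dims s}.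
Arguments in_dom {R N dims s}.
Arguments isc_rel_dom {R N dims s}.
Arguments is_GNE {R N dims s}.
Arguments gauss_seidel_seq {R N dims s}.
Arguments pcvg {R N dims}.
Arguments vcvg {R m}.

(** Let [z^(k)] be the mixed profile seen by player [i] at step [k]. Since
    polynomials are continuous, every quantity in the Gauss-Seidel step
    converges, so feasibility of the iterates passes to the limit [xs]. For
    optimality, fix a competitor [y] feasible at [xs_{-i}]; inner
    semicontinuity of [G_i] yields points [w^(k)] feasible for the
    [k]-th subproblem with [w^(k) -> y]. Comparing the minimizer [x_i^(k+1)]
    with [w^(k)] and dropping the nonnegative proximal term on the left gives
    [f_i(z^(k), x_i^(k+1)) <= f_i(z^(k), w^(k)) + tau^(k) |w^(k) - x_i^(k)|^2],
    and since [tau^(k) -> 0] the limit is [f_i(xs) <= f_i(y, xs_{-i})]. *)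
From HB Require Import structures.
From mathcomp Require Import all_boot all_order all_algebra.
From mathcomp Require Import all_classical all_reals all_analysis.
Import Order.TTheory GRing.Theory Num.Theory.
Import numFieldNormedType.Exports.
Local Open Scope classical_set_scope.
Local Open Scope ring_scope.
Arguments repl {R N dims}.
Arguments gs_mixed {R N dims}.

Section VectorLimits.
Context {R : realType} {m : nat}.

Lemma vcvgB {u v : nat -> 'rV[R]_m} {a b : 'rV[R]_m} :
  vcvg u a -> vcvg v b -> vcvg (fun k => u k - v k) (a - b).
Proof.
move=> ua vb j; rewrite !mxE.
have -> : (fun k => (u k - v k) 0 j) = (fun k => u k 0 j - v k 0 j).
  by apply: funext => k; rewrite !mxE.
exact: cvgB.
Qed.

Lemma sqnorm_ge0 (v : 'rV[R]_m) : 0 <= sqnorm R v.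
Proof. by apply: sumr_ge0 => j _; exact: sqr_ge0. Qed.

Lemma cvg_sqnorm {u : nat -> 'rV[R]_m} {a : 'rV[R]_m} :
  vcvg u a -> sqnorm R (u k) @[k --> \oo] --> sqnorm R a.
Proof.
move=> ua; apply: cvg_big => // [|j _]; first exact: add_continuous.
exact: cvgM.
Qed.

End VectorLimits.

Section ProfileLimits.
Context {R : realType} {N : nat} {dims : 'I_N -> nat}.
Implicit Types (u : nat -> profile R dims) (z : profile R dims).

Lemma is_poly_cvg {p : profile R dims -> R} {u z} :
  is_poly p -> pcvg u z -> p (u k) @[k --> \oo] --> p z.
Proof.
move=> + uz; elim=> [c|i j|p1 q _ IHp _ IHq|p1 q _ IHp _ IHq].
- exact: cvg_cst.
- exact: uz.
- exact: cvgD.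
- exact: cvgM.
Qed.

Lemma repl_id z i : repl z i (z i) = z.
Proof.
apply: functional_extensionality_dep => j.
by case: (eqVneq i j) => [<-|ne]; rewrite /repl ?dfwithin ?dfwithout.
Qed.

Lemma pcvg_repl {u z i} {v : nat -> 'rV[R]_(dims i)} {y} :
  pcvg u z -> vcvg v y -> pcvg (fun k => repl (u k) i (v k)) (repl z i y).
Proof.
move=> uz vy j; case: (eqVneq i j) => [<-|ne].
  rewrite /repl dfwithin; suff -> : (fun k => repl (u k) i (v k) i) = v by [].
  by apply: funext => k; rewrite /repl dfwithin.
rewrite /repl dfwithout //.
suff -> : (fun k => repl (u k) i (v k) j) = u^~ j by exact: uz.
by apply: funext => k; rewrite /repl dfwithout.
Qed.

Lemma pcvg_shiftS {u z} : pcvg u z -> pcvg (fun k => u k.+1) z.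
Proof. by move=> uz i j; rewrite (cvg_shiftS (fun k => u k i 0 j)); exact: uz. Qed.

Lemma pcvg_gs_mixed {u z} i : pcvg u z -> pcvg (fun k => gs_mixed u k i) z.
Proof.
move=> uz j c; rewrite /gs_mixed; case: (j < i)%N; last exact: uz.
exact: pcvg_shiftS.
Qed.

Context {s : 'I_N -> nat} {g : forall i : 'I_N, 'I_(s i) -> profile R dims -> R}.

Lemma feasible_at_closed {i u z} :
  (forall l, is_poly (g i l)) -> pcvg u z ->
  (forall k, feasible_at g i (u k)) -> feasible_at g i z.
Proof.
move=> gpoly uz ufeas l.
apply: (ler_cvg_to (cvg_cst (0 : R)) (is_poly_cvg (gpoly l) uz)).
by apply: nearW => k; exact: ufeas.
Qed.

End ProfileLimits.

Section GaussSeidelLimit.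
Context {R : realType} {N : nat} {dims : 'I_N -> nat}.
Context {f : 'I_N -> profile R dims -> R}.
Context {s : 'I_N -> nat} {g : forall i : 'I_N, 'I_(s i) -> profile R dims -> R}.
Context {x : nat -> profile R dims} {tau : nat -> R} {xs : profile R dims}.
Hypotheses (gs : gauss_seidel_seq g f x tau) (x_cvg : pcvg x xs).
Variable i : 'I_N.

Let z k := gs_mixed x k i.

Lemma gs_iterate_cvg : pcvg (fun k => repl (z k) i (x k.+1 i)) xs.
Proof.
rewrite -{1}(repl_id xs i); apply: pcvg_repl; first exact: pcvg_gs_mixed.
by move=> j; exact: (pcvg_shiftS x_cvg).
Qed.

Lemma gs_limit_feasible :
  (forall l, is_poly (g i l)) -> Gmap g i xs (xs i).
Proof.
move=> gpoly; rewrite /Gmap /= repl_id.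
apply: (feasible_at_closed gpoly gs_iterate_cvg) => k.
by case: gs => _ [_ [_ step]]; case: (step k i).
Qed.

Lemma gs_limit_optimal :
  is_poly (f i) -> tau @ \oo --> 0 -> isc_rel_dom g i ->
  forall y, Gmap g i xs y -> f i xs <= f i (repl xs i y).
Proof.
case: gs => _ [tau0 [tau_mono step]] fpoly tau_cvg isc y y_feas.
have z_cvg : pcvg z xs by exact: pcvg_gs_mixed.
have [w [w_feas w_cvg]] : exists w : nat -> 'rV[R]_(dims i),
    (forall k, Gmap g i (z k) (w k)) /\ vcvg w y.
  apply: (isc xs (ex_intro _ y y_feas) y y_feas z) => [k|j _].
    by exists (x k.+1 i); case: (step k i).
  exact: z_cvg.
have tau_ge0 k : 0 <= tau k.
  by case: k => [|k]; [exact: ltW | case/andP: (tau_mono k)].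
have lhs_cvg := is_poly_cvg fpoly gs_iterate_cvg.
have rhs_cvg : f i (repl (z k) i (w k)) + tau k * sqnorm R (w k - x k i)
    @[k --> \oo] --> f i (repl xs i y) + 0 * sqnorm R (y - xs i).
  apply: cvgD; first exact: (is_poly_cvg fpoly (pcvg_repl z_cvg w_cvg)).
  exact: cvgM (cvg_sqnorm (vcvgB w_cvg (x_cvg i))).
rewrite -[leRHS]addr0 -(mul0r (sqnorm R (y - xs i))).
apply: (ler_cvg_to lhs_cvg rhs_cvg); apply: nearW => k /=.
apply: le_trans ((step k i).2 _ (w_feas k)).
by rewrite lerDl mulr_ge0 ?sqnorm_ge0.
Qed.

End GaussSeidelLimit.

Theorem theorem3p7 (R : realType) (N : nat) (dims : 'I_N -> nat)
  (f : 'I_N -> profile R dims -> R)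
  (s : 'I_N -> nat) (g : forall i : 'I_N, 'I_(s i) -> profile R dims -> R)
  (x : nat -> profile R dims) (tau : nat -> R) (xs : profile R dims) :
  (forall i, is_poly (f i)) ->
  (forall i (l : 'I_(s i)), is_poly (g i l)) ->
  gauss_seidel_seq g f x tau ->
  pcvg x xs ->
  tau @ \oo --> 0 ->
  (forall i, isc_rel_dom g i) ->
  is_GNE g f xs.
Proof.
move=> fpoly gpoly gs x_cvg tau_cvg isc i; split.
  exact: (gs_limit_feasible gs x_cvg).
exact: (gs_limit_optimal gs x_cvg).
Qed.
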